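(* Let $E$ be a Grothendieck topos, $A$ a ring object of $E$, and ${A\text{-mod}}$ the category of $A$-modules in $E$, equipped with the Grothendieck topology described in the context. Then this topology on ${A\text{-mod}}$ is subcanonical: for every $A$-module $K$, the presheaf $\operatorname{Hom}_A(-,K)$ on ${A\text{-mod}}$ is a sheaf.
   Context: For an object $U$ of $E$ and a sheaf $M$ in $E$, $\Gamma(U,M)=\operatorname{Hom}_E(U,M)$ denotes the set of sections of $M$ over $U$. The topology on ${A\text{-mod}}$: a family of $A$-module homomorphisms $\{M_i\to M\}_{i\in I}$ is a cover if for every object $U$ of $E$ and every finite subset $\Lambda\subseteq\Gamma(U,M)$ there is a covering family $\{U_k\to U\}$ in $E$ such that for each $k$ there exists some $i\in I$ for which every element of $\Lambda|_{U_k}$ lifts to a section in $\Gamma(U_k,M_i)$ (i.e. finite sets of local sections of $M$ lift, locally in $E$, simultaneously to a single $M_i$). *)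

From HB Require Import structures.
From Stdlib Require List.
From mathcomp Require Import all_boot all_algebra.
Unset Implicit Arguments. Unset Strict Implicit. Unset Printing Implicit Defensive.
Import GRing.Theory.
Local Open Scope ring_scope.

Record Cat := {
  ob :> Type;
  hom : ob -> ob -> Type;
  idc : forall a, hom a a;
  comp : forall a b c, hom b c -> hom a b -> hom a c;
  comp_id_l : forall a b (f : hom a b), comp a b b (idc b) f = f;
  comp_id_r : forall a b (f : hom a b), comp a a b f (idc a) = f;
  comp_assoc : forall a b c d (h : hom c d) (g : hom b c) (f : hom a b),
      comp a c d h (comp a b c g f) = comp a b d (comp b c d h g) f }.
Arguments hom {_}.
Arguments idc {_}.
Arguments comp {_ _ _ _}.

Section Site.
Variable C : Cat.

Definition is_sieve (c : C) (S : forall d : C, hom d c -> Prop) : Prop :=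
  forall d (f : hom d c), S d f -> forall e (g : hom e d), S e (comp f g).

Record Topology := {
  covers :> forall c : C, (forall d : C, hom d c -> Prop) -> Prop;
  covers_sieve : forall c S, covers c S -> is_sieve c S;
  covers_max : forall c, covers c (fun _ _ => True);
  covers_stable : forall c S, covers c S -> forall d (f : hom d c),
      covers d (fun e (g : hom e d) => S e (comp f g));
  covers_trans : forall c S, covers c S -> forall R, is_sieve c R ->
      (forall d (f : hom d c), S d f -> covers d (fun e (g : hom e d) => R e (comp f g))) ->
      covers c R }.

Variable J : Topology.

Definition is_presheaf (F : C -> Type) (res : forall a b : C, hom a b -> F b -> F a) :=
  (forall a (x : F a), res a a (idc a) x = x) /\
  (forall a b c (f : hom a b) (g : hom b c) (x : F c),
      res a c (comp g f) x = res a b f (res b c g x)).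

Definition is_sheaf (F : C -> Type) (res : forall a b : C, hom a b -> F b -> F a) :=
  forall (c : C) (S : forall d : C, hom d c -> Prop), J c S ->
  forall x : forall d (f : hom d c), S d f -> F d,
    (forall d (f : hom d c) (H : S d f) e (g : hom e d) (H' : S e (comp f g)),
        x e (comp f g) H' = res e d g (x d f H)) ->
    exists s : F c,
      (forall d (f : hom d c) (H : S d f), res d c f s = x d f H) /\
      (forall s' : F c, (forall d (f : hom d c) (H : S d f), res d c f s' = x d f H) ->
                 s' = s).

Record SetSheaf := {
  sh :> C -> Type;
  shres : forall a b : C, hom a b -> sh b -> sh a;
  sh_presheaf : is_presheaf sh shres;
  sh_sheaf : is_sheaf sh shres }.

Record ShMor (U V : SetSheaf) := {
  shmor :> forall a : C, U a -> V a;
  shmor_nat : forall a b (f : hom a b) (x : U b),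
      shmor a (shres U a b f x) = shres V a b f (shmor b x) }.

(* covering families of E (canonical topology = jointly epimorphic families):
   every section of U is locally in the image of some u_k *)
Definition epi_family (U : SetSheaf) (K : Type) (Uk : K -> SetSheaf)
    (uk : forall k, ShMor (Uk k) U) : Prop :=
  forall (c : C) (x : U c),
    J c (fun d (f : hom d c) => exists k (y : Uk k d), uk k d y = shres U d c f x).

Record RingObj := {
  rg :> C -> pzRingType;
  rgres : forall a b : C, hom a b -> rg b -> rg a;
  rgres_add : forall a b (f : hom a b) (r s : rg b),
      rgres a b f (r + s) = rgres a b f r + rgres a b f s;
  rgres_mul : forall a b (f : hom a b) (r s : rg b),
      rgres a b f (r * s) = rgres a b f r * rgres a b f s;
  rgres_one : forall a b (f : hom a b), rgres a b f 1 = 1;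
  rg_presheaf : is_presheaf (fun a => (rg a : Type)) rgres;
  rg_sheaf : is_sheaf (fun a => (rg a : Type)) rgres }.

Record AMod (A : RingObj) := {
  md :> C -> zmodType;
  mdres : forall a b : C, hom a b -> md b -> md a;
  mdres_add : forall a b (f : hom a b) (x y : md b),
      mdres a b f (x + y) = mdres a b f x + mdres a b f y;
  act : forall a : C, A a -> md a -> md a;
  act_addr : forall a (r : A a) (x y : md a), act a r (x + y) = act a r x + act a r y;
  act_addl : forall a (r s : A a) (x : md a), act a (r + s) x = act a r x + act a s x;
  act_mul : forall a (r s : A a) (x : md a), act a (r * s) x = act a r (act a s x);
  act_one : forall a (x : md a), act a 1 x = x;
  act_nat : forall a b (f : hom a b) (r : A b) (x : md b),
      mdres a b f (act b r x) = act a (rgres A a b f r) (mdres a b f x);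
  md_presheaf : is_presheaf (fun a => (md a : Type)) mdres;
  md_sheaf : is_sheaf (fun a => (md a : Type)) mdres }.

Definition AMod_sheaf (A : RingObj) (M : AMod A) : SetSheaf :=
  {| sh := fun a => (M a : Type); shres := mdres A M;
     sh_presheaf := md_presheaf A M; sh_sheaf := md_sheaf A M |}.

Record AHom (A : RingObj) (M N : AMod A) := {
  ahom :> forall a : C, M a -> N a;
  ahom_add : forall a (x y : M a), ahom a (x + y) = ahom a x + ahom a y;
  ahom_act : forall a (r : A a) (x : M a), ahom a (act A M a r x) = act A N a r (ahom a x);
  ahom_nat : forall a b (f : hom a b) (x : M b),
      ahom a (mdres A M a b f x) = mdres A N a b f (ahom b x) }.

Definition Sect (A : RingObj) (U : SetSheaf) (M : AMod A) := ShMor U (AMod_sheaf A M).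

Definition AMod_cover (A : RingObj) (M : AMod A) (I : Type) (Mi : I -> AMod A)
    (g : forall i, AHom A (Mi i) M) : Prop :=
  forall (U : SetSheaf) (Lambda : list (Sect A U M)),
    exists (K : Type) (Uk : K -> SetSheaf) (uk : forall k, ShMor (Uk k) U),
      epi_family U K Uk uk /\
      forall k, exists i, forall s, List.In s Lambda ->
        exists t : Sect A (Uk k) (Mi i),
          forall (c : C) (y : Uk k c), g i c (t c y) = s c (uk k c y).

(* Hom_A(-, K) satisfies the sheaf condition for a cover {g_i : M_i -> M}:
   every family f_i : M_i -> K compatible on the fibre products
   M_i x_M M_j (computed sectionwise) glues to a unique f : M -> K. *)
Definition Hom_sheaf_for (A : RingObj) (K : AMod A) (M : AMod A) (I : Type)
    (Mi : I -> AMod A) (g : forall i, AHom A (Mi i) M) : Prop :=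
  forall f : forall i, AHom A (Mi i) K,
    (forall i j (c : C) (x : Mi i c) (y : Mi j c),
        g i c x = g j c y -> f i c x = f j c y) ->
    exists h : AHom A M K,
      (forall i (c : C) (x : Mi i c), h c (g i c x) = f i c x) /\
      (forall h' : AHom A M K, (forall i (c : C) (x : Mi i c), h' c (g i c x) = f i c x) ->
         forall (c : C) (x : M c), h' c x = h c x).

Definition AMod_subcanonical (A : RingObj) : Prop :=
  forall (K M : AMod A) (I : Type) (Mi : I -> AMod A) (g : forall i, AHom A (Mi i) M),
    AMod_cover A M I Mi g -> Hom_sheaf_for A K M I Mi g.

End Site.

(* Let f_i : M_i -> K be compatible. A section m of M over c lifts locally to
   the M_i, and f_i of the local lifts are compatible local sections of K, so
   they glue to a section h(m) of K; this is the only section restricting to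
   f_i(z) wherever z lifts m. Taking U = M x M and the two projections as the
   finite set of sections in the definition of a cover shows that any two
   sections of M lift locally to the same M_i, which is what makes h additive. *)
From Pilot Require Import Defs.
From mathcomp Require Import all_boot all_algebra.
From Stdlib Require Import ClassicalEpsilon FunctionalExtensionality PropExtensionality.
Import GRing.Theory.
Local Open Scope ring_scope.

#[local] Arguments shres {C J} s {a b} _ _.
#[local] Arguments mdres {C J A} M {a b} _ _ : rename.
#[local] Arguments act {C J A} M {a} _ _ : rename.
#[local] Arguments md_presheaf {C J A} M : rename.
#[local] Arguments md_sheaf {C J A} M : rename.
#[local] Arguments sh_presheaf {C J} s.
#[local] Arguments sh_sheaf {C J} s.
#[local] Arguments ahom_nat {C J A M N} h {a b} f x : rename.
#[local] Arguments ahom_add {C J A M N} h {a} x y : rename.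
#[local] Arguments ahom_act {C J A M N} h {a} r x : rename.
#[local] Arguments mdres_add {C J A} M {a b} f x y : rename.
#[local] Arguments act_nat {C J A} M {a b} f r x : rename.

Section Site.
Variables (C : Cat) (J : Topology C).

Lemma sheaf_separated (F : C -> Type) (res : forall a b : C, Defs.hom a b -> F b -> F a) :
  is_presheaf C F res -> is_sheaf C J F res ->
  forall c S, J c S -> forall s s' : F c,
  (forall d (f : Defs.hom d c), S d f -> res d c f s = res d c f s') -> s = s'.
Proof.
move=> [_ res_comp] F_sheaf c S JS s s' eq_res.
have [t [_ t_unique]] := F_sheaf c S JS (fun d f _ => res d c f s)
  (fun d f _ e g _ => res_comp _ _ _ _ _ _).
rewrite (t_unique s) //; symmetry; apply: t_unique => d f Sf.
by rewrite eq_res.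
Qed.

Lemma covers_sup (c : C) (S R : forall d : C, Defs.hom d c -> Prop) :
  J c S -> is_sieve C c R -> (forall d f, S d f -> R d f) -> J c R.
Proof.
move=> JS sieveR subSR; apply: (covers_trans C J c S JS R sieveR) => d f Sf.
have -> : (fun e (g : Defs.hom e d) => R e (Defs.comp f g)) = (fun _ _ => True).
  apply: functional_extensionality_dep => e; apply: functional_extensionality => g.
  apply: propositional_extensionality; split=> // _.
  exact: sieveR _ _ (subSR _ _ Sf) _ _.
exact: covers_max.
Qed.

Section ProductSheaf.
Variables U V : SetSheaf C J.

Lemma prod_presheaf :
  is_presheaf C (fun a => (U a * V a)%type)
    (fun a b f p => (shres U f p.1, shres V f p.2)).
Proof.
have [U_id U_comp] := sh_presheaf U; have [V_id V_comp] := sh_presheaf V.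
by split=> [a [x y] | a b c f g [x y]] /=; rewrite ?U_id ?V_id ?U_comp ?V_comp.
Qed.

Lemma prod_sheaf_condition :
  is_sheaf C J (fun a => (U a * V a)%type)
    (fun a b f p => (shres U f p.1, shres V f p.2)).
Proof.
move=> c S JS x x_compat.
have [s1 [s1_res s1_unique]] := sh_sheaf U c S JS (fun d f H => (x d f H).1)
  (fun d f H e g H' => f_equal fst (x_compat d f H e g H')).
have [s2 [s2_res s2_unique]] := sh_sheaf V c S JS (fun d f H => (x d f H).2)
  (fun d f H e g H' => f_equal snd (x_compat d f H e g H')).
exists (s1, s2); split=> [d f H | [t1 t2] t_res] /=.
  by rewrite s1_res s2_res; case: (x d f H).
congr pair; [apply: s1_unique | apply: s2_unique] => d f H; by rewrite -(t_res d f H).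
Qed.

Definition prod_sheaf : SetSheaf C J :=
  {| sh := fun a => (U a * V a)%type;
     shres := fun a b f p => (shres U f p.1, shres V f p.2);
     sh_presheaf := prod_presheaf; sh_sheaf := prod_sheaf_condition |}.

Definition fst_sheaf : ShMor C J prod_sheaf U :=
  Build_ShMor C J prod_sheaf U (fun a (p : prod_sheaf a) => p.1) (fun _ _ _ _ => erefl).

Definition snd_sheaf : ShMor C J prod_sheaf V :=
  Build_ShMor C J prod_sheaf V (fun a (p : prod_sheaf a) => p.2) (fun _ _ _ _ => erefl).

End ProductSheaf.

Section Modules.
Variable A : RingObj C J.

Lemma mdres_comp (M : AMod C J A) a b c (f : Defs.hom a b) (g : Defs.hom b c) (x : M c) :
  mdres M (Defs.comp g f) x = mdres M f (mdres M g x).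
Proof. exact: (proj2 (md_presheaf M)). Qed.

Section Cover.
Variables (M : AMod C J A) (I : Type) (Mi : I -> AMod C J A)
  (g : forall i, AHom C J A (Mi i) M).
Hypothesis g_cover : AMod_cover C J A M I Mi g.

Definition lift_sieve c (m : M c) d (f : Defs.hom d c) : Prop :=
  exists z : {i : I & Mi i d}, g (tag z) d (tagged z) = mdres M f m.

Definition lift2_sieve c (m1 m2 : M c) d (f : Defs.hom d c) : Prop :=
  exists i (z1 z2 : Mi i d), g i d z1 = mdres M f m1 /\ g i d z2 = mdres M f m2.

Lemma lift_sieve_is_sieve c (m : M c) : is_sieve C c (lift_sieve c m).
Proof.
move=> d f [[i z] /= gz] e h; exists (existT _ i (mdres (Mi i) h z)) => /=.
by rewrite ahom_nat gz mdres_comp.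
Qed.

Lemma lift2_sieve_is_sieve c (m1 m2 : M c) : is_sieve C c (lift2_sieve c m1 m2).
Proof.
move=> d f [i [z1 [z2 [gz1 gz2]]]] e h.
exists i, (mdres (Mi i) h z1), (mdres (Mi i) h z2).
by rewrite !ahom_nat gz1 gz2 !mdres_comp.
Qed.

Lemma covers_lift2 c (m1 m2 : M c) : J c (lift2_sieve c m1 m2).
Proof.
pose MM := prod_sheaf (AMod_sheaf C J A M) (AMod_sheaf C J A M).
have [K [Uk [uk [uk_epi uk_lift]]]] :=
  g_cover MM [:: fst_sheaf _ _; snd_sheaf _ _]%list.
apply: covers_sup (uk_epi c (m1, m2)) (lift2_sieve_is_sieve c m1 m2) _.
move=> d f [k [y uky]]; have [i i_lifts] := uk_lift k.
have [t1 gt1] := i_lifts (fst_sheaf _ _) (or_introl erefl).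
have [t2 gt2] := i_lifts (snd_sheaf _ _) (or_intror (or_introl erefl)).
by exists i, (t1 d y), (t2 d y); rewrite gt1 gt2 /= uky.
Qed.

Lemma covers_lift c (m : M c) : J c (lift_sieve c m).
Proof.
apply: covers_sup (covers_lift2 c m m) (lift_sieve_is_sieve c m) _.
by move=> d f [i [z [_ [gz _]]]]; exists (existT _ i z).
Qed.

Section Glue.
Variables (K : AMod C J A) (fi : forall i, AHom C J A (Mi i) K).
Hypothesis fi_compat : forall i j (c : C) (x : Mi i c) (y : Mi j c),
  g i c x = g j c y -> fi i c x = fi j c y.

Definition glues c (m : M c) (s : K c) : Prop :=
  forall d (f : Defs.hom d c) i (z : Mi i d),
    g i d z = mdres M f m -> mdres K f s = fi i d z.

Lemma glues_unique {c} {m : M c} {s s' : K c} : glues c m s -> glues c m s' -> s = s'.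
Proof.
move=> ms ms'; apply: (sheaf_separated _ _ (md_presheaf K) (md_sheaf K) c _ (covers_lift c m)).
by move=> d f [[i z] /= gz]; rewrite (ms _ _ _ _ gz) (ms' _ _ _ _ gz).
Qed.

Lemma glues_mdres {c} {m : M c} {s : K c} {d} (f : Defs.hom d c) :
  glues c m s -> glues d (mdres M f m) (mdres K f s).
Proof.
move=> ms e h i z gz; rewrite -mdres_comp; apply: ms.
by rewrite mdres_comp.
Qed.

Lemma glues_lift {i c} (x : Mi i c) : glues c (g i c x) (fi i c x).
Proof.
move=> d f j z gz; rewrite -ahom_nat; apply: fi_compat.
by rewrite ahom_nat gz.
Qed.

Lemma glues_exists {c} (m : M c) : exists s, glues c m s.
Proof.
pose lift d f (H : lift_sieve c m d f) := proj1_sig (constructive_indefinite_description _ H).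
have liftP d f H : g (tag (lift d f H)) d (tagged (lift d f H)) = mdres M f m :=
  proj2_sig (constructive_indefinite_description _ H).
pose x d f H := fi (tag (lift d f H)) d (tagged (lift d f H)).
have x_compat d f (H : lift_sieve c m d f) e (h : Defs.hom e d) H' :
    x e (Defs.comp f h) H' = mdres K h (x d f H).
  rewrite -ahom_nat; apply: fi_compat.
  by rewrite ahom_nat !liftP mdres_comp.
have [s [s_res _]] := md_sheaf K c _ (covers_lift c m) x x_compat.
exists s => d f i z gz.
have H : lift_sieve c m d f by exists (existT _ i z).
by rewrite (s_res d f H); apply: fi_compat; rewrite liftP gz.
Qed.

Lemma glues_add {c} {m1 m2 : M c} {s1 s2 : K c} :
  glues c m1 s1 -> glues c m2 s2 -> glues c (m1 + m2) (s1 + s2).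
Proof.
move=> ms1 ms2 d f i z gz; rewrite mdres_add.
apply: (sheaf_separated _ _ (md_presheaf K) (md_sheaf K) d _
  (covers_lift2 d (mdres M f m1) (mdres M f m2))).
move=> e h [j [z1 [z2 [gz1 gz2]]]].
rewrite mdres_add (glues_mdres f ms1 _ _ _ _ gz1) (glues_mdres f ms2 _ _ _ _ gz2) -ahom_add -ahom_nat.
by apply: fi_compat; rewrite ahom_nat gz ahom_add gz1 gz2 !mdres_add.
Qed.

Lemma glues_act {c} (r : A c) {m : M c} {s : K c} :
  glues c m s -> glues c (act M r m) (act K r s).
Proof.
move=> ms d f i z gz; rewrite act_nat.
apply: (sheaf_separated _ _ (md_presheaf K) (md_sheaf K) d _ (covers_lift d (mdres M f m))).
move=> e h [[j y] /= gy].
rewrite act_nat (glues_mdres f ms _ _ _ _ gy) -ahom_act -ahom_nat.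
by apply: fi_compat; rewrite ahom_nat gz ahom_act gy !act_nat.
Qed.

Definition glued {c} (m : M c) : K c :=
  proj1_sig (constructive_indefinite_description _ (glues_exists m)).

Lemma gluedP {c} (m : M c) : glues c m (glued m).
Proof. exact: proj2_sig (constructive_indefinite_description _ (glues_exists m)). Qed.

Lemma glued_add c (m1 m2 : M c) : glued (m1 + m2) = glued m1 + glued m2.
Proof. exact: glues_unique (gluedP _) (glues_add (gluedP _) (gluedP _)). Qed.

Lemma glued_act c (r : A c) (m : M c) : glued (act M r m) = act K r (glued m).
Proof. exact: glues_unique (gluedP _) (glues_act r (gluedP _)). Qed.

Lemma glued_mdres a b (f : Defs.hom a b) (m : M b) :
  glued (mdres M f m) = mdres K f (glued m).
Proof. exact: glues_unique (gluedP _) (glues_mdres f (gluedP m)). Qed.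

Definition glued_hom : AHom C J A M K :=
  Build_AHom C J A M K (@glued) (@glued_add) (@glued_act) (@glued_mdres).

Lemma glued_hom_lift i c (x : Mi i c) : glued_hom c (g i c x) = fi i c x.
Proof. exact: glues_unique (gluedP _) (glues_lift x). Qed.

Lemma glued_hom_unique (h : AHom C J A M K) :
  (forall i c (x : Mi i c), h c (g i c x) = fi i c x) ->
  forall c (m : M c), h c m = glued_hom c m.
Proof.
move=> h_lift c m; apply: glues_unique (gluedP _) => d f i z gz.
by rewrite -ahom_nat -gz h_lift.
Qed.

End Glue.

Lemma Hom_sheaf_for_cover (K : AMod C J A) : Hom_sheaf_for C J A K M I Mi g.
Proof.
move=> fi fi_compat; exists (glued_hom K fi fi_compat); split.
- exact: glued_hom_lift.
- exact: glued_hom_unique.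
Qed.

End Cover.
End Modules.
End Site.

Theorem mainTheorem1 (C : Cat) (J : Topology C) (A : RingObj C J) :
  AMod_subcanonical C J A.
Proof.
move=> K M I Mi g g_cover; exact: Hom_sheaf_for_cover.
Qed.
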